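(* Let $\mathcal X=\mathcal X_1\times\cdots\times\mathcal X_n$ with $\mathcal X_i\subseteq\mathbb R^{d_i}$, and let $f_1,\dots,f_m:\mathcal X\to\mathbb R$ be BDC functions (with respect to this block structure). Then the following functions are also BDC: (i) $\sum_{r=1}^m\alpha_r f_r$ for any $\alpha_1,\dots,\alpha_m\in\mathbb R$; (ii) $\max_{r=1,\dots,m} f_r$ (pointwise); (iii) $\min_{r=1,\dots,m} f_r$ (pointwise).
   Context: Block notation: for $\bm\theta\in\mathcal X$, $\theta_i\in\mathcal X_i$ denotes its $i$th block and $\bar{\bm\theta}_i$ denotes the vector obtained from $\bm\theta$ by replacing the $i$th block by $0$; $\bar{\mathcal X}_i=\mathcal X_1\times\cdots\times\{0\}^{d_i}\times\cdots\times\mathcal X_n$. A function $f:\mathcal X\to\mathbb R$ is called BDC (multi-block difference-of-convex) if for every $i\in\{1,\dots,n\}$ there exist functions $g_i,h_i:\mathcal X_i\times\bar{\mathcal X}_i\to\mathbb R$ such that $f(\bm\theta)=g_i(\theta_i;\bar{\bm\theta}_i)-h_i(\theta_i;\bar{\bm\theta}_i)$ for all $\bm\theta\in\mathcal X$, and for every fixed $\bar{\bm\theta}_i$ the functions $g_i(\cdot;\bar{\bm\theta}_i)$ and $h_i(\cdot;\bar{\bm\theta}_i)$ are convex in $\theta_i$. *)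

From mathcomp Require Import all_boot all_order all_algebra.
From mathcomp Require Import reals.
Set Implicit Arguments. Unset Strict Implicit. Unset Printing Implicit Defensive.
Import Order.TTheory GRing.Theory Num.Theory.
Local Open Scope ring_scope.

Definition point (R : realType) (n : nat) (d : 'I_n -> nat) :=
  forall i : 'I_n, 'rV[R]_(d i).

Definition inX (R : realType) n (d : 'I_n -> nat)
  (X : forall i : 'I_n, 'rV[R]_(d i) -> Prop) (th : point R d) : Prop :=
  forall i, X i (th i).

Definition bar (R : realType) n (d : 'I_n -> nat) (i : 'I_n) (th : point R d)
  : point R d := fun j => if j == i then 0 else th j.

Definition inXbar (R : realType) n (d : 'I_n -> nat)
  (X : forall i : 'I_n, 'rV[R]_(d i) -> Prop) (i : 'I_n) (th : point R d) : Prop :=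
  th i = 0 /\ forall j, j != i -> X j (th j).

(* convexity of g on the set A (inequality required whenever the
   convex combination stays in A; standard convexity when A is convex) *)
Definition convex_on (R : realType) (k : nat) (A : 'rV[R]_k -> Prop)
  (g : 'rV[R]_k -> R) : Prop :=
  forall x y (t : R), A x -> A y -> 0 <= t -> t <= 1 ->
    A ((1 - t) *: x + t *: y) ->
    g ((1 - t) *: x + t *: y) <= (1 - t) * g x + t * g y.

Definition BDC (R : realType) n (d : 'I_n -> nat)
  (X : forall i : 'I_n, 'rV[R]_(d i) -> Prop) (f : point R d -> R) : Prop :=
  forall i : 'I_n, exists g h : 'rV[R]_(d i) -> point R d -> R,
    (forall th, inX X th -> f th = g (th i) (bar i th) - h (th i) (bar i th)) /\
    (forall thb, inXbar X i thb ->
       convex_on (X i) (fun x => g x thb) /\ convex_on (X i) (fun x => h x thb)).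

Definition fmax (R : realType) n (d : 'I_n -> nat) m (hm : (0 < m)%N)
  (f : 'I_m -> point R d -> R) : point R d -> R :=
  fun th => \big[Num.max/f (Ordinal hm) th]_(r < m) f r th.
Definition fmin (R : realType) n (d : 'I_n -> nat) m (hm : (0 < m)%N)
  (f : 'I_m -> point R d -> R) : point R d -> R :=
  fun th => \big[Num.min/f (Ordinal hm) th]_(r < m) f r th.

(* The BDC functions form a vector space, since sums and nonnegative multiples
   of convex functions are convex and multiplying by a negative scalar just swaps
   the two convex parts.  They are closed under binary max and min because of
   the identities
     max (g1 - h1) (g2 - h2) = max (g1 + h2) (g2 + h1) - (h1 + h2),
     min (g1 - h1) (g2 - h2) = (g1 + g2) - max (g1 + h2) (g2 + h1),
   in which every displayed part is convex blockwise, the max of two convex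
   functions being convex. *)

From mathcomp Require Import all_boot all_order all_algebra.
From mathcomp Require Import reals.
From mathcomp Require Import lra.
Set Implicit Arguments. Unset Strict Implicit. Unset Printing Implicit Defensive.
Import Order.TTheory GRing.Theory Num.Theory.
Local Open Scope ring_scope.

Lemma max_sub_sub (R : realDomainType) (a1 b1 a2 b2 : R) :
  Num.max (a1 - b1) (a2 - b2) = Num.max (a1 + b2) (a2 + b1) - (b1 + b2).
Proof. by case: leP => ?; case: leP => ?; lra. Qed.

Lemma min_sub_sub (R : realDomainType) (a1 b1 a2 b2 : R) :
  Num.min (a1 - b1) (a2 - b2) = (a1 + a2) - Num.max (a1 + b2) (a2 + b1).
Proof. by case: leP => ?; case: leP => ?; lra. Qed.

Section ConvexOn.
Variables (R : realType) (k : nat) (A : 'rV[R]_k -> Prop).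

Lemma convex_on_const (c : R) : convex_on A (fun _ => c).
Proof. by move=> *; lra. Qed.

Lemma convex_onD g1 g2 : convex_on A g1 -> convex_on A g2 ->
  convex_on A (fun x => g1 x + g2 x).
Proof.
move=> c1 c2 x y t Ax Ay t0 t1 Az.
by have := c1 x y t Ax Ay t0 t1 Az; have := c2 x y t Ax Ay t0 t1 Az; lra.
Qed.

Lemma convex_onZ (a : R) g : 0 <= a -> convex_on A g ->
  convex_on A (fun x => a * g x).
Proof.
move=> a0 c x y t Ax Ay t0 t1 Az.
by have := ler_wpM2l a0 (c x y t Ax Ay t0 t1 Az); lra.
Qed.

Lemma convex_on_max g1 g2 : convex_on A g1 -> convex_on A g2 ->
  convex_on A (fun x => Num.max (g1 x) (g2 x)).
Proof.
move=> c1 c2 x y t Ax Ay t0 t1 Az.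
have t0' : 0 <= 1 - t by lra.
rewrite ge_max; apply/andP; split.
- apply: le_trans (c1 x y t Ax Ay t0 t1 Az) _.
  by apply: lerD; apply: ler_wpM2l; rewrite // le_max lexx.
- apply: le_trans (c2 x y t Ax Ay t0 t1 Az) _.
  by apply: lerD; apply: ler_wpM2l; rewrite // le_max lexx orbT.
Qed.

End ConvexOn.

Section BDCClosure.
Variables (R : realType) (n : nat) (d : 'I_n -> nat)
  (X : forall i : 'I_n, 'rV[R]_(d i) -> Prop).

Lemma BDC_eq f1 f2 : (forall th, f1 th = f2 th) -> BDC X f1 -> BDC X f2.
Proof.
move=> f12 Hf i; have [g [h [E C]]] := Hf i.
by exists g, h; split=> // th Xth; rewrite -f12 E.
Qed.

Lemma BDC_const (c : R) : BDC X (fun _ => c).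
Proof.
move=> i; exists (fun _ _ => c), (fun _ _ => 0); split=> [th _|thb _].
  by rewrite subr0.
by split; apply: convex_on_const.
Qed.

Lemma BDC_add f1 f2 : BDC X f1 -> BDC X f2 -> BDC X (fun th => f1 th + f2 th).
Proof.
move=> H1 H2 i; have [g1 [h1 [E1 C1]]] := H1 i; have [g2 [h2 [E2 C2]]] := H2 i.
exists (fun x t => g1 x t + g2 x t), (fun x t => h1 x t + h2 x t); split.
  by move=> th Xth; rewrite E1 // E2 //; lra.
move=> thb Xthb; have [cg1 ch1] := C1 _ Xthb; have [cg2 ch2] := C2 _ Xthb.
by split; apply: convex_onD.
Qed.

Lemma BDC_scale (a : R) f : BDC X f -> BDC X (fun th => a * f th).
Proof.
move=> Hf i; have [g [h [E C]]] := Hf i.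
have [a0|a0] := lerP 0 a.
  exists (fun x t => a * g x t), (fun x t => a * h x t); split.
    by move=> th Xth; rewrite E //; lra.
  by move=> thb Xthb; have [cg ch] := C _ Xthb; split; apply: convex_onZ.
have Na0 : 0 <= - a by lra.
exists (fun x t => - a * h x t), (fun x t => - a * g x t); split.
  by move=> th Xth; rewrite E //; lra.
by move=> thb Xthb; have [cg ch] := C _ Xthb; split; apply: convex_onZ.
Qed.

Lemma BDC_max f1 f2 : BDC X f1 -> BDC X f2 ->
  BDC X (fun th => Num.max (f1 th) (f2 th)).
Proof.
move=> H1 H2 i; have [g1 [h1 [E1 C1]]] := H1 i; have [g2 [h2 [E2 C2]]] := H2 i.
exists (fun x t => Num.max (g1 x t + h2 x t) (g2 x t + h1 x t)),
  (fun x t => h1 x t + h2 x t); split.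
  by move=> th Xth; rewrite E1 // E2 // max_sub_sub.
move=> thb Xthb; have [cg1 ch1] := C1 _ Xthb; have [cg2 ch2] := C2 _ Xthb.
by split; [apply: convex_on_max; apply: convex_onD | apply: convex_onD].
Qed.

Lemma BDC_min f1 f2 : BDC X f1 -> BDC X f2 ->
  BDC X (fun th => Num.min (f1 th) (f2 th)).
Proof.
move=> H1 H2 i; have [g1 [h1 [E1 C1]]] := H1 i; have [g2 [h2 [E2 C2]]] := H2 i.
exists (fun x t => g1 x t + g2 x t),
  (fun x t => Num.max (g1 x t + h2 x t) (g2 x t + h1 x t)); split.
  by move=> th Xth; rewrite E1 // E2 // min_sub_sub.
move=> thb Xthb; have [cg1 ch1] := C1 _ Xthb; have [cg2 ch2] := C2 _ Xthb.
by split; [apply: convex_onD | apply: convex_on_max; apply: convex_onD].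
Qed.

Lemma BDC_big (op : R -> R -> R) (f0 : point R d -> R) (I : Type) (s : seq I)
    (F : I -> point R d -> R) :
  (forall f1 f2, BDC X f1 -> BDC X f2 -> BDC X (fun th => op (f1 th) (f2 th))) ->
  BDC X f0 -> (forall r, BDC X (F r)) ->
  BDC X (fun th => \big[op/f0 th]_(r <- s) F r th).
Proof.
move=> BDC_op BDC_f0 BDC_F; elim: s => [|r s IHs].
  by apply: BDC_eq BDC_f0 => th; rewrite big_nil.
by apply: BDC_eq (BDC_op _ _ (BDC_F r) IHs) => th; rewrite big_cons.
Qed.

End BDCClosure.

Theorem proposition3p1 (R : realType) (n : nat) (d : 'I_n -> nat)
  (X : forall i : 'I_n, 'rV[R]_(d i) -> Prop)
  (m : nat) (hm : (0 < m)%N) (f : 'I_m -> point R d -> R) :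
  (forall r, BDC X (f r)) ->
  (forall alpha : 'I_m -> R, BDC X (fun th => \sum_(r < m) alpha r * f r th)) /\
  BDC X (fmax hm f) /\
  BDC X (fmin hm f).
Proof.
move=> BDC_f; split; [|split].
- move=> alpha; apply: BDC_big (@BDC_add _ _ _ X) (BDC_const X 0) _ => r.
  exact: BDC_scale.
- exact: BDC_big (@BDC_max _ _ _ X) (BDC_f _) BDC_f.
- exact: BDC_big (@BDC_min _ _ _ X) (BDC_f _) BDC_f.
Qed.
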